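(* Let $N\le K$ be positive integers and let $g\in\{1,\dots,N\}$. Consider the caching problem with $N$ files and $K$ users, each with a cache of size $MF$ bits with $M=\frac{N}{gK}$. There exists a placement (with coded prefetching allowed) such that, for every demand vector $\mathbf d\in\{1,\dots,N\}^K$, the delivery rate $$R(\mathbf d)=\frac{K N_e(\mathbf d)\binom{N-1}{g-1}-g\binom{N_e(\mathbf d)+1}{g+1}}{K\binom{N-1}{g-1}}$$ is achievable. Moreover, for non-integer $g\in[1,N]$ (i.e. $M\in[\frac1K,\frac NK]$), the rate given by the lower convex envelope (in $M$) of these values at $g\in\{1,\dots,N\}$ is achievable.
   Context: Caching model: a server stores $N$ files $W_1,\dots,W_N$, each of $F$ bits, and is connected by a shared error-free link to $K$ users $U_1,\dots,U_K$, each with a cache of $MF$ bits. In the placement phase, each user fills its cache with an arbitrary function (coding allowed) of the files, without knowing future demands. Then each user $U_k$ requests one file $W_{\mathbf d(k)}$; $\mathbf d=(\mathbf d(1),\dots,\mathbf d(K))$ is the demand vector and $N_e(\mathbf d)$ the number of distinct entries of $\mathbf d$. In the delivery phase the server, knowing $\mathbf d$, broadcasts a message $X$ of $RF$ bits (a function of $\mathbf d$, the files and the caches) such that every user $U_k$ can reconstruct $W_{\mathbf d(k)}$ from $X$ and its cache. A rate $R$ is achievable for demand $\mathbf d$ if such a message exists (for the fixed placement); the worst-case rate is $R^*=\max_{\mathbf d}R(\mathbf d)$. Memory sharing between two schemes is allowed, so achievable (rate, memory) pairs may be convexly combined. The parameter $g$ is defined by $g=\frac{N}{MK}$. *)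

From HB Require Import structures.
From mathcomp Require Import all_boot all_order all_algebra.
Set Implicit Arguments. Unset Strict Implicit. Unset Printing Implicit Defensive.
Import Order.TTheory GRing.Theory Num.Theory.

Definition files (F N : nat) := {ffun 'I_N -> F.-tuple bool}.

(* A demand vector d : users 'I_K -> files 'I_N (0-indexed). *)
Definition demand (K N : nat) := {ffun 'I_K -> 'I_N}.

Definition Ne (K N : nat) (d : demand K N) : nat := #|[set d k | k : 'I_K]|.

Local Open Scope ring_scope.

(* Given a placement Z (user k stores Z k W, c bits, an arbitrary function of the
   files), rate R is achievable for demand d if some broadcast message X of r bits,
   r <= R F, lets every user k decode W_{d k} from X and its own cache, for every
   realization W of the files (zero error). *)
Definition rate_achievable (N K F c : nat)
    (Z : 'I_K -> files F N -> c.-tuple bool) (d : demand K N) (R : rat) : Prop :=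
  exists r : nat, (r%:R <= R * F%:R) /\
  exists X : files F N -> r.-tuple bool,
  exists D : 'I_K -> r.-tuple bool -> c.-tuple bool -> F.-tuple bool,
    forall (W : files F N) (k : 'I_K), D k (X W) (Z k W) = W (d k).

(* There is a placement with cache size M (file size F > 0, caches of c <= M F bits)
   under which, for every demand d, the rate rate d is achievable
   (rate d is given as a predicate of admissible values: every v with P d v). *)
Definition placement_achieves (N K : nat) (M : rat)
    (P : demand K N -> rat -> Prop) : Prop :=
  exists F : nat, (0 < F)%N /\
  exists c : nat, c%:R <= M * F%:R /\
  exists Z : 'I_K -> files F N -> c.-tuple bool,
    forall (d : demand K N) (v : rat), P d v -> rate_achievable Z d v.

Definition Rg (N K g n : nat) : rat :=
  (((K * n * 'C(N.-1, g.-1))%:R - (g * 'C(n.+1, g.+1))%:R) / (K * 'C(N.-1, g.-1))%:R).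

Definition Rworst (N K g : nat) : rat :=
  \big[Num.max/0]_(d : demand K N) Rg N K g (Ne d).

Definition convex_comb_at (n : nat) (x y : 'I_n -> rat) (M v : rat) : Prop :=
  exists lam : 'I_n -> rat,
    (forall i, 0 <= lam i) /\ \sum_i lam i = 1 /\
    \sum_i lam i * x i = M /\ \sum_i lam i * y i = v.

Definition lower_convex_envelope (n : nat) (x y : 'I_n -> rat) (M v : rat) : Prop :=
  convex_comb_at x y M v /\ (forall v', convex_comb_at x y M v' -> v <= v').

Arguments placement_achieves : clear implicits.

From HB Require Import structures.
From mathcomp Require Import all_boot all_order all_algebra.
From mathcomp Require Import zify ring.
From Stdlib Require Import FunctionalExtensionality Classical.
Set Implicit Arguments. Unset Strict Implicit. Unset Printing Implicit Defensive.
Import Order.TTheory GRing.Theory Num.Theory.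

(* Split every file W_n into K C(N-1,g-1) subfiles W_{n,(j,A)}, one for each user j and each
   g-set A of files containing n.  User k caches, for every g-set A, the XOR of the
   W_{n,(k,A)} over n in A: C(N,g) subfiles, i.e. N/(gK) of a file.

   Let D be the set of requested files and l_n a user requesting n.  A requested subfile
   W_{n,(j,A)} with A inside D and d_j = n or d_j outside A has a pivot: W_{n,(l_n,A)} if
   d_j is in A, and W_{n,(l_a,T\a)} with T = A + {d_j} and some a in T \ {n} otherwise.
   The server sends each such subfile XORed with its pivot, every other requested subfile
   uncoded, and for every (g+1)-set T inside D the XOR of the pivots W_{n,(l_a,T\a)}, n in T.
   User k recovers the pivot from its cache entry for A, resp. for T \ {d_k}, since all the
   other subfiles in that entry are sent uncoded, resp. XORed with their pivots taken from T.
   At least g C(N_e,g) + (g+1) C(N_e,g+1) requested subfiles are their own pivot and are not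
   sent, against C(N_e,g+1) extra messages, so at most N_e K C(N-1,g-1) - g C(N_e+1,g+1)
   subfiles are sent.

   For non-integer g, memory sharing between the integer points, with the weights of the
   lower convex envelope brought to a common denominator. *)

Definition caching_scheme (N K F c : nat) (r : demand K N -> nat) : Prop :=
  exists Z : 'I_K -> ('I_N -> 'I_F -> bool) -> 'I_c -> bool,
  forall d : demand K N,
  exists X : ('I_N -> 'I_F -> bool) -> 'I_(r d) -> bool,
  exists D : 'I_K -> ('I_(r d) -> bool) -> ('I_c -> bool) -> 'I_F -> bool,
    forall W k, D k (X W) (Z k W) =1 W (d k).
Arguments caching_scheme : clear implicits.

Lemma placement_of_scheme N K F c r (M : rat) (P : demand K N -> rat -> Prop) :
  caching_scheme N K F c r -> (0 < F)%N -> (c%:R <= M * F%:R)%R ->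
  (forall d v, P d v -> ((r d)%:R <= v * F%:R)%R) -> placement_achieves N K M P.
Proof.
move=> [Z HZ] F_gt0 cM rP; exists F; split => //; exists c; split => //.
exists (fun k Wt => [tuple Z k (fun n => tnth (Wt n)) i | i < c]) => d v Pdv.
exists (r d); split; first exact: rP.
have [X [D HD]] := HZ d.
exists (fun Wt => [tuple X (fun n => tnth (Wt n)) i | i < r d]).
exists (fun k x z => [tuple D k (tnth x) (tnth z) i | i < F]) => W k.
apply: eq_from_tnth => i; rewrite tnth_mktuple.
have tnth_map n (f : 'I_n -> bool) : tnth [tuple f i | i < n] = f.
  by apply: functional_extensionality => j; rewrite tnth_mktuple.
by rewrite !tnth_map HD.
Qed.

Definition cat_bits a b (f : 'I_a -> bool) (g : 'I_b -> bool) : 'I_(a + b) -> bool :=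
  fun i => match split i with inl x => f x | inr y => g y end.

Lemma cat_bits_lshift a b f g : @cat_bits a b f g \o lshift b = f.
Proof.
by apply: functional_extensionality => x; rewrite /cat_bits /= (unsplitK (inl _)).
Qed.

Lemma cat_bits_rshift a b f g : @cat_bits a b f g \o @rshift a b = g.
Proof.
by apply: functional_extensionality => x; rewrite /cat_bits /= (unsplitK (inr _)).
Qed.

Lemma cat_bits_split a b (h : 'I_(a + b) -> bool) :
  cat_bits (h \o lshift b) (h \o @rshift a b) =1 h.
Proof. by move=> i; rewrite /cat_bits -[in RHS](splitK i); case: (split i). Qed.

Section SchemeAlgebra.
Variables N K : nat.

Lemma caching_scheme_ext F c r r' :
  r =1 r' -> caching_scheme N K F c r -> caching_scheme N K F c r'.
Proof. by move/functional_extensionality <-. Qed.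

Lemma caching_scheme0 : caching_scheme N K 0 0 (fun _ => 0%N).
Proof.
exists (fun _ _ _ => false) => d; exists (fun _ _ => false).
by exists (fun _ _ _ _ => false) => ? ? [].
Qed.

Lemma caching_scheme_cat F1 c1 r1 F2 c2 r2 :
  caching_scheme N K F1 c1 r1 -> caching_scheme N K F2 c2 r2 ->
  caching_scheme N K (F1 + F2) (c1 + c2) (fun d => r1 d + r2 d)%N.
Proof.
move=> [Z1 HZ1] [Z2 HZ2].
pose lW (W : 'I_N -> 'I_(F1 + F2) -> bool) n := W n \o lshift F2.
pose rW (W : 'I_N -> 'I_(F1 + F2) -> bool) n := W n \o @rshift F1 F2.
exists (fun k W => cat_bits (Z1 k (lW W)) (Z2 k (rW W))) => d.
have [X1 [D1 E1]] := HZ1 d; have [X2 [D2 E2]] := HZ2 d.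
exists (fun W => cat_bits (X1 (lW W)) (X2 (rW W))).
exists (fun k x z => cat_bits (D1 k (x \o lshift _) (z \o lshift _))
                              (D2 k (x \o @rshift _ _) (z \o @rshift _ _))).
move=> W k i; rewrite !cat_bits_lshift !cat_bits_rshift -[RHS]cat_bits_split.
by rewrite /cat_bits; case: (split i) => x; [exact: E1 | exact: E2].
Qed.

Lemma caching_scheme_sum n (F c : 'I_n -> nat) (r : 'I_n -> demand K N -> nat) :
  (forall i, caching_scheme N K (F i) (c i) (r i)) ->
  caching_scheme N K (\sum_i F i) (\sum_i c i) (fun d => \sum_i r i d)%N.
Proof.
elim: n F c r => [|n IHn] F c r Hi.
  by rewrite !big_ord0; apply: caching_scheme_ext caching_scheme0 => d; rewrite big_ord0.
have := caching_scheme_cat (Hi ord0) (IHn _ _ _ (fun i => Hi (lift ord0 i))).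
by rewrite -!big_ord_recl; apply: caching_scheme_ext => d; rewrite big_ord_recl.
Qed.

Lemma caching_scheme_rep a F c r : caching_scheme N K F c r ->
  caching_scheme N K (a * F) (a * c) (fun d => a * r d)%N.
Proof.
move=> H; elim: a => [|a IHa].
  by apply: caching_scheme_ext caching_scheme0 => d; rewrite mul0n.
by rewrite !mulSn; apply: caching_scheme_cat.
Qed.
End SchemeAlgebra.

Section SupportedBits.
Variables (T : finType) (A : {set T}).

Definition restrict_bits (f : T -> bool) : 'I_#|A| -> bool := fun i => f (enum_val i).

Definition extend_bits (b : 'I_#|A| -> bool) : T -> bool :=
  fun x => [exists i, (enum_val i == x) && b i].

Lemma extend_bits_enum b i : extend_bits b (enum_val i) = b i.
Proof.
apply/existsP/idP => [[j /andP[/eqP/enum_val_inj-> //]]|bi].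
by exists i; rewrite eqxx.
Qed.

Lemma extend_restrict_bits f :
  (forall x, x \notin A -> f x = false) -> extend_bits (restrict_bits f) = f.
Proof.
move=> f0; apply: functional_extensionality => x.
have [xA|xA] := boolP (x \in A).
  by rewrite -[x in LHS](enum_rankK_in xA xA) extend_bits_enum /restrict_bits enum_rankK_in.
rewrite f0 //; apply/existsP => -[i /andP[/eqP xi _]].
by rewrite -xi enum_valP in xA.
Qed.
End SupportedBits.
Arguments restrict_bits {T} A f.

(* Bits may be indexed by arbitrary finite types: only those in [file n], [cache] and
   [msg d] are counted, and the cache and message bits outside them must be [false]. *)
Lemma caching_scheme_of_supported N K F (S C X : finType)
    (file : 'I_N -> {set S}) (cache : {set C}) (msg : demand K N -> {set X})
    (Z : 'I_K -> ('I_N -> S -> bool) -> C -> bool)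
    (Xm : demand K N -> ('I_N -> S -> bool) -> X -> bool)
    (Dec : demand K N -> 'I_K -> (X -> bool) -> (C -> bool) -> S -> bool) :
  (forall n, #|file n| = F) ->
  (forall k W a, a \notin cache -> Z k W a = false) ->
  (forall d W x, x \notin msg d -> Xm d W x = false) ->
  (forall (d : demand K N) W k s,
     s \in file (d k) -> Dec d k (Xm d W) (Z k W) s = W (d k) s) ->
  caching_scheme N K F #|cache| (fun d => #|msg d|).
Proof.
move=> cardF Z0 X0 DecP.
pose W' (W : 'I_N -> 'I_F -> bool) n := extend_bits (W n \o cast_ord (cardF n)).
exists (fun k W => restrict_bits cache (Z k (W' W))) => d.
exists (fun W => restrict_bits (msg d) (Xm d (W' W))).
exists (fun k x z i => Dec d k (extend_bits x) (extend_bits z)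
                            (enum_val (cast_ord (esym (cardF (d k))) i))).
move=> W k i.
rewrite (extend_restrict_bits (X0 d _)) (extend_restrict_bits (Z0 k _)) DecP ?enum_valP //.
by rewrite /W' extend_bits_enum /= cast_ordKV.
Qed.

Lemma card_sets_containing (T : finType) (x : T) k : (0 < k)%N ->
  #|[set A : {set T} | (x \in A) && (#|A| == k)]| = 'C(#|T|.-1, k.-1).
Proof.
case: k => // k _.
have notin_B (B : {set T}) : B \subset [set~ x] -> x \notin B.
  by move/subsetP=> sB; apply/negP => /sB; rewrite !inE eqxx.
have -> : [set A : {set T} | (x \in A) && (#|A| == k.+1)] =
          [set x |: B | B in [set B : {set T} | B \subset [set~ x] & #|B| == k]].
  apply/setP => A; rewrite inE; apply/andP/imsetP => [[xA /eqP cardA]|[B]].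
    exists (A :\ x); last by rewrite setD1K.
    have /eqP cardAx : #|A :\ x| == k by move: (cardsD1 x A); rewrite xA cardA => -[->].
    by rewrite inE cardAx eqxx andbT setDE subsetIr.
  rewrite inE => /andP[sB /eqP cardB] ->.
  by rewrite setU11 cardsU1 notin_B // cardB.
rewrite card_in_imset ?cards_draws ?cardsC1 // => B1 B2.
rewrite !inE => /andP[/notin_B x1 _] /andP[/notin_B x2 _] e12.
by rewrite -(setU1K x1) -(setU1K x2) e12.
Qed.

Lemma card_dep_pairs (T U : finType) (A : {set T}) (B : T -> {set U}) :
  #|[set x : T * U | (x.1 \in A) && (x.2 \in B x.1)]| = (\sum_(a in A) #|B a|)%N.
Proof.
rewrite -sum1_card (eq_bigl (fun x : T * U => (x.1 \in A) && (x.2 \in B x.1))) => [|x];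
  last by rewrite inE.
rewrite -(pair_big_dep (mem A) (fun a => mem (B a)) (fun _ _ => 1%N)) /=.
by apply: eq_bigr => a _; rewrite sum1_card.
Qed.

Lemma card_disjoint_le (T : finType) (A B C : {set T}) :
  [disjoint A & B] -> A :|: B \subset C -> (#|A| + #|B| <= #|C|)%N.
Proof.
by move=> AB ABC; rewrite -cardsUI (disjoint_setI0 AB) cards0 addn0 subset_leq_card.
Qed.

Section CodedScheme.
Variables N K g : nat.

Definition subfile := ('I_K * {set 'I_N})%type.

Definition subfiles (n : 'I_N) : {set subfile} :=
  [set s : subfile | (n \in s.2) && (#|s.2| == g)].

Definition piece := ('I_N * subfile)%type.

Definition bit (W : 'I_N -> subfile -> bool) (p : piece) := W p.1 p.2.

Definition cache_bits (k : 'I_K) (W : 'I_N -> subfile -> bool) (A : {set 'I_N}) :=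
  (#|A| == g) && \big[addb/false]_(n in A) W n (k, A).

Hypothesis g_gt0 : (0 < g)%N.

Lemma card_subfiles n : #|subfiles n| = (K * 'C(N.-1, g.-1))%N.
Proof.
have -> : subfiles n = setX [set: 'I_K] [set A : {set 'I_N} | (n \in A) && (#|A| == g)].
  by apply/setP => -[j A]; rewrite !inE.
by rewrite cardsX cardsT card_ord card_sets_containing // card_ord.
Qed.

Variables (d : demand K N) (k0 : 'I_K).

Definition demanded : {set 'I_N} := [set d k | k : 'I_K].

(* [k0] is only a default for files that nobody requested. *)
Definition leader (n : 'I_N) : 'I_K := odflt k0 [pick k | d k == n].

Definition other (T : {set 'I_N}) (n : 'I_N) : 'I_N := odflt n [pick x in T :\ n].

Definition requested (p : piece) := (p.1 \in demanded) && (p.2 \in subfiles p.1).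

Definition uncoded (p : piece) := let: (n, (j, A)) := p in
  ~~ (A \subset demanded) || (d j \in A) && (d j != n).

Definition pivot_of_set (T : {set 'I_N}) (n : 'I_N) : piece :=
  (n, (leader (other T n), T :\ other T n)).

Definition pivot (p : piece) : piece := let: (n, (j, A)) := p in
  if d j \in A then (n, (leader n, A)) else pivot_of_set (d j |: A) n.

Definition coded_sets := [set T : {set 'I_N} | T \subset demanded & #|T| == g.+1].

Definition message (W : 'I_N -> subfile -> bool) (x : piece + {set 'I_N}) : bool :=
  match x with
  | inl p => requested p && (bit W p (+) ~~ uncoded p && bit W (pivot p))
  | inr T => (T \in coded_sets) && \big[addb/false]_(n in T) bit W (pivot_of_set T n)
  end.

Definition unmask k (y : piece + {set 'I_N} -> bool) (z : {set 'I_N} -> bool) B :=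
  z B (+) \big[addb/false]_(n in B) y (inl (n, (k, B))).

Definition decode k y z (s : subfile) : bool :=
  let: (j, A) := s in
  y (inl (d k, s)) (+) ~~ uncoded (d k, s) &&
    (if d j \in A then unmask k y z A
     else y (inr (d j |: A)) (+) unmask k y z ((d j |: A) :\ d k)).

Lemma unmask_message W k (B : {set 'I_N}) : B \subset demanded -> #|B| = g ->
  unmask k (message W) (cache_bits k W) B =
  \big[addb/false]_(n in B) (~~ uncoded (n, (k, B)) && bit W (pivot (n, (k, B)))).
Proof.
move=> BD cardB; rewrite /unmask /cache_bits cardB eqxx /=.
under [X in _ (+) X]eq_bigr => n nB do
  rewrite /message /requested /= (subsetP BD _ nB) inE /= nB cardB eqxx.
by rewrite big_split addbA addbb.
Qed.

Section CodedPiece.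
Variables (W : 'I_N -> subfile -> bool) (k j : 'I_K) (A : {set 'I_N}).
Hypotheses (kA : d k \in A) (cardA : #|A| = g) (coded : ~~ uncoded (d k, (j, A))).

Let AD : A \subset demanded.
Proof. by move: coded; rewrite /uncoded negb_or negbK => /andP[]. Qed.

Lemma pivot_from_cache : d j \in A ->
  unmask k (message W) (cache_bits k W) A = bit W (pivot (d k, (j, A))).
Proof.
move=> jA; rewrite unmask_message // (big_setD1 (d k)) //= big1 ?addbF.
  by rewrite /uncoded /pivot AD kA jA eqxx.
by move=> n; rewrite in_setD1 /uncoded kA => /andP[nk _]; rewrite eq_sym nk orbT.
Qed.

Lemma pivot_from_coded_set : d j \notin A ->
  message W (inr (d j |: A)) (+)
    unmask k (message W) (cache_bits k W) ((d j |: A) :\ d k) =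
  bit W (pivot (d k, (j, A))).
Proof.
move=> jA; set T := d j |: A; set B := T :\ d k.
have kT : d k \in T by rewrite setU1r.
have cardT : #|T| = g.+1 by rewrite cardsU1 jA cardA.
have TD : T \subset demanded by rewrite subUset AD andbT sub1set imset_f.
have cardB : #|B| = g by move: (cardsD1 (d k) T); rewrite kT cardT => -[].
have BD : B \subset demanded by apply: subset_trans TD; apply: subD1set.
have kB : d k \notin B by rewrite setD11.
rewrite unmask_message // /message inE TD cardT eqxx (big_setD1 (d k)) //=.
under [X in _ (+) X]eq_bigr => n _ do
  rewrite /uncoded /pivot BD (negbTE kB) /= setD1K //.
by rewrite addbK /pivot (negbTE jA).
Qed.

End CodedPiece.

Lemma decodeE k y z j A : decode k y z (j, A) =
  y (inl (d k, (j, A))) (+) ~~ uncoded (d k, (j, A)) &&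
    (if d j \in A then unmask k y z A
     else y (inr (d j |: A)) (+) unmask k y z ((d j |: A) :\ d k)).
Proof. by []. Qed.

Lemma message_inl W p : message W (inl p) =
  requested p && (bit W p (+) ~~ uncoded p && bit W (pivot p)).
Proof. by []. Qed.

Lemma decode_message W k s : s \in subfiles (d k) ->
  decode k (message W) (cache_bits k W) s = W (d k) s.
Proof.
case: s => j A; rewrite inE => /andP[kA /eqP cardA].
have req : requested (d k, (j, A)).
  by rewrite /requested /demanded /= imset_f // inE kA cardA eqxx.
rewrite decodeE message_inl req andTb.
have [_|coded] := boolP (uncoded (d k, (j, A))); first by rewrite /= !addbF.
have [jA|jA] := boolP (d j \in A).
  by rewrite (pivot_from_cache W kA cardA coded jA) addbK.
by rewrite (pivot_from_coded_set W kA cardA coded jA) addbK.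
Qed.

Definition sent_pieces := [set p | requested p && (uncoded p || (p != pivot p))].

Definition message_support : {set piece + {set 'I_N}} :=
  [set x | match x with inl p => p \in sent_pieces | inr T => T \in coded_sets end].

Lemma message_supported W x : x \notin message_support -> message W x = false.
Proof.
case: x => [p|T]; rewrite inE.
  rewrite inE message_inl negb_and => /orP[/negbTE->|] //.
  by rewrite negb_or negbK => /andP[/negbTE-> /eqP <-]; rewrite addbb andbF.
by move/negbTE=> /= ->.
Qed.

Lemma card_message_support : #|message_support| = (#|sent_pieces| + #|coded_sets|)%N.
Proof.
rewrite -sum1_card big_sumType /= -!sum1_card.
by congr (_ + _); apply: eq_bigl => x; rewrite inE.
Qed.

Definition pivots := [set p | [&& requested p, ~~ uncoded p & p == pivot p]].

Definition pointed_sets k :=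
  [set x : {set 'I_N} * 'I_N | [&& x.1 \subset demanded, #|x.1| == k & x.2 \in x.1]].

Lemma card_pointed_sets k : #|pointed_sets k| = (k * 'C(#|demanded|, k))%N.
Proof.
have -> : pointed_sets k = [set x | (x.1 \in [set A : {set 'I_N} | A \subset demanded & #|A| == k])
                                  && (x.2 \in x.1)].
  by apply/setP => x; rewrite !inE andbA.
rewrite (card_dep_pairs _ id) (eq_bigr (fun _ => k)) => [|A]; last by rewrite inE => /andP[_ /eqP].
by rewrite sum_nat_const cards_draws mulnC.
Qed.

Lemma leaderP n : n \in demanded -> d (leader n) = n.
Proof.
case/imsetP=> k _ ->; rewrite /leader.
by case: pickP => [k' /eqP //|/(_ k)]; rewrite eqxx.
Qed.

Lemma otherP (T : {set 'I_N}) n : (1 < #|T|)%N -> other T n \in T :\ n.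
Proof.
move=> T_gt1; rewrite /other; case: pickP => [//|/eq_card0 cardTn].
by move: (cardsD1 n T) T_gt1; rewrite cardTn addn0 => ->; case: (n \in T).
Qed.

Lemma cached_piece_in_pivots (A : {set 'I_N}) n :
  A \subset demanded -> #|A| = g -> n \in A -> (n, (leader n, A)) \in pivots.
Proof.
move=> AD cardA nA; have dn := leaderP (subsetP AD _ nA).
by rewrite !inE /requested /uncoded /pivot /= (subsetP AD _ nA) inE nA cardA AD dn nA !eqxx.
Qed.

Lemma pivot_of_set_in_pivots (T : {set 'I_N}) n :
  T \subset demanded -> #|T| = g.+1 -> n \in T -> pivot_of_set T n \in pivots.
Proof.
move=> TD cardT nT; have := @otherP T n; rewrite cardT ltnS => /(_ g_gt0).
rewrite /pivot_of_set; set a := other T n; rewrite in_setD1 => /andP[an aT].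
have da := leaderP (subsetP TD _ aT).
have nTa : n \in T :\ a by rewrite in_setD1 eq_sym an.
have cardTa : #|T :\ a| = g by move: (cardsD1 a T); rewrite aT cardT => -[].
have TaD : T :\ a \subset demanded by apply: subset_trans TD; apply: subD1set.
rewrite !inE /requested /uncoded /pivot /pivot_of_set /= (subsetP TD _ nT) inE nTa cardTa eqxx.
by rewrite TaD da setD11 /= setD1K // -/a eqxx.
Qed.

Lemma leader_inj : {in demanded &, injective leader}.
Proof. by move=> a b aD bD eq_ab; rewrite -(leaderP aD) -(leaderP bD) eq_ab. Qed.

Lemma pointed_setsP k (x : {set 'I_N} * 'I_N) :
  x \in pointed_sets k -> [/\ x.1 \subset demanded, #|x.1| = k & x.2 \in x.1].
Proof. by rewrite inE => /and3P[? /eqP ? ?]. Qed.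

Lemma other_in_pointed_set T n : (T, n) \in pointed_sets g.+1 -> other T n \in T :\ n.
Proof. by case/pointed_setsP=> _ /= cardT _; rewrite otherP // cardT ltnS. Qed.

Lemma pivot_of_set_inj :
  {in pointed_sets g.+1 &, injective (fun x => pivot_of_set x.1 x.2)}.
Proof.
move=> [T n] [T' m] Tn T'm; have [TD _ _] := pointed_setsP Tn.
have [T'D _ _] := pointed_setsP T'm.
move: (other_in_pointed_set Tn) (other_in_pointed_set T'm).
rewrite /pivot_of_set /= !in_setD1 => /andP[_ aT] /andP[_ bT'] [nm eq_leader eq_T].
subst m; have ab := leader_inj (subsetP TD _ aT) (subsetP T'D _ bT') eq_leader.
by rewrite -(setD1K aT) -(setD1K bT') eq_T ab.
Qed.

Lemma cached_piece_neq_pivot_of_set A n T m :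
  (A, n) \in pointed_sets g -> (T, m) \in pointed_sets g.+1 ->
  (n, (leader n, A)) != pivot_of_set T m.
Proof.
move=> /pointed_setsP[AD _ nA] Tm; have [TD _ _] := pointed_setsP Tm.
move: (other_in_pointed_set Tm).
rewrite /pivot_of_set /= in_setD1 => /andP[+ /(subsetP TD) aD].
apply: contra => /eqP[nm eq_leader _]; subst m.
by rewrite -(leader_inj (subsetP AD _ nA) aD eq_leader).
Qed.

Lemma card_pivots :
  (g * 'C(#|demanded|, g) + g.+1 * 'C(#|demanded|, g.+1) <= #|pivots|)%N.
Proof.
pose cached (x : {set 'I_N} * 'I_N) : piece := (x.2, (leader x.2, x.1)).
rewrite -!card_pointed_sets -(card_in_imset pivot_of_set_inj).
rewrite -(card_in_imset (f := cached)) => [|[A n] [B m] _ _ [-> _ ->] //].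
apply: card_disjoint_le.
  rewrite -setI_eq0; apply/eqP/setP => p; rewrite !inE.
  apply/negP => /andP[/imsetP[[A n] An ->] /imsetP[[T m] Tm /eqP]].
  by apply/negP; apply: cached_piece_neq_pivot_of_set.
apply/subsetP => p; rewrite inE => /orP[] /imsetP[[A n] /pointed_setsP[AD cardA nA] ->].
  exact: cached_piece_in_pivots.
exact: pivot_of_set_in_pivots.
Qed.

Lemma card_requested :
  #|[set p | requested p]| = (#|demanded| * (K * 'C(N.-1, g.-1)))%N.
Proof.
rewrite (card_dep_pairs _ subfiles) (eq_bigr _ (fun n _ => card_subfiles n)).
by rewrite sum_nat_const.
Qed.

Lemma rate_bound : (#|sent_pieces| + #|coded_sets| + g * 'C(#|demanded|.+1, g.+1)
                    <= #|demanded| * (K * 'C(N.-1, g.-1)))%N.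
Proof.
have : (#|sent_pieces| + #|pivots| <= #|[set p | requested p]|)%N.
  apply: card_disjoint_le.
    rewrite -setI_eq0; apply/eqP/setP => p; rewrite !inE.
    by case: (requested p) (uncoded p) (p == pivot p) => [] [] [].
  by apply/subsetP => p; rewrite !inE => /orP[/andP[] | /and3P[]].
rewrite card_requested /coded_sets cards_draws binS; have := card_pivots; lia.
Qed.

End CodedScheme.

Lemma caching_scheme_integer N K g (k0 : 'I_K) : (0 < g)%N ->
  caching_scheme N K (K * 'C(N.-1, g.-1)) 'C(N, g)
    (fun d => #|sent_pieces g d k0| + #|coded_sets g d|)%N.
Proof.
move=> g_gt0; apply: (caching_scheme_ext (card_message_support g ^~ k0)).
have <- : #|[set A : {set 'I_N} | #|A| == g]| = 'C(N, g) by rewrite card_draws card_ord.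
apply: (caching_scheme_of_supported (Z := @cache_bits N K g)
         (Xm := fun d => message g d k0) (card_subfiles K g_gt0)) => [k W A|d W x|].
- by rewrite inE /cache_bits => /negbTE ->.
- exact: message_supported.
- by move=> d W k s; apply: decode_message.
Qed.

Local Open Scope ring_scope.

Lemma nat_ratio_of_ge0 (x : rat) : 0 <= x -> exists p q : nat, (0 < q)%N /\ x * q%:R = p%:R.
Proof.
move=> x_ge0; exists `|numq x|%N, `|denq x|%N; split; first by rewrite absz_gt0 denq_neq0.
have denE : (`|denq x|%N)%:R = (denq x)%:~R :> rat by case: (denq x) (denq_gt0 x).
have numE : (`|numq x|%N)%:R = (numq x)%:~R :> rat.
  by move: (numq_ge0 x); rewrite x_ge0; case: (numq x).
by rewrite denE numE numqE.
Qed.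

Lemma common_denominator n (lam : 'I_n -> rat) : (forall i, 0 <= lam i) ->
  exists Q : nat, (0 < Q)%N /\ exists a : 'I_n -> nat, forall i, (a i)%:R = lam i * Q%:R.
Proof.
elim: n lam => [|n IHn] lam lam_ge0.
  by exists 1%N; split => //; exists (fun _ => 0%N) => -[].
have [Q [Q_gt0 [a aE]]] := IHn (fun i => lam (lift ord0 i)) (fun i => lam_ge0 _).
have [p [q [q_gt0 pqE]]] := nat_ratio_of_ge0 (lam_ge0 ord0).
exists (Q * q)%N; split; first by rewrite muln_gt0 Q_gt0.
exists (fun i => if unlift ord0 i is Some j then (a j * q)%N else (p * Q)%N) => i.
case: unliftP => [j ->|->]; first by rewrite natrM aE natrM mulrA.
by rewrite natrM -pqE natrM mulrAC mulrA.
Qed.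

Lemma memory_sharing N K n (F c : 'I_n -> nat) (r : 'I_n -> demand K N -> nat)
    (M : 'I_n -> rat) (R : 'I_n -> demand K N -> rat) (lam : 'I_n -> rat) :
  (forall i, caching_scheme N K (F i) (c i) (r i)) -> (forall i, 0 < F i)%N ->
  (forall i, (c i)%:R <= M i * (F i)%:R) ->
  (forall i d, (r i d)%:R <= R i d * (F i)%:R) ->
  (forall i, 0 <= lam i) -> \sum_i lam i = 1 ->
  placement_achieves N K (\sum_i lam i * M i) (fun d v => \sum_i lam i * R i d <= v).
Proof.
move=> scheme F_gt0 cM rR lam_ge0 lam_sum1.
have [Q [Q_gt0 [a aE]]] := common_denominator lam_ge0.
pose P := (\prod_i F i)%N.
(* Scheme [i] is repeated so as to fill exactly the fraction [lam i] of a file of size [Q * P]. *)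
pose copies i := (a i * \prod_(j | j != i) F j)%N.
have copiesE i (x : rat) : (copies i)%:R * (x * (F i)%:R) = lam i * x * (Q * P)%:R.
  by rewrite /copies [P](bigD1 i) //= !natrM aE; ring.
have sizeE : (\sum_i copies i * F i)%N = (Q * P)%N.
  apply/eqP; rewrite -(eqr_nat rat) natr_sum.
  under eq_bigr => i _ do rewrite natrM -[(F i)%:R]mul1r copiesE mulr1.
  by rewrite -mulr_suml lam_sum1 mul1r.
have := caching_scheme_sum (fun i => caching_scheme_rep (copies i) (scheme i)).
move/placement_of_scheme; apply.
- by rewrite sizeE muln_gt0 Q_gt0 prodn_gt0.
- rewrite sizeE natr_sum mulr_suml ler_sum // => i _.
  by rewrite natrM -copiesE ler_wpM2l.
- move=> d v le_v; rewrite sizeE natr_sum.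
  apply: le_trans (ler_wpM2r (ler0n _ _) le_v); rewrite mulr_suml ler_sum // => i _.
  by rewrite natrM -copiesE ler_wpM2l.
Qed.

Lemma placement_achieves_weaken N K M (P P' : demand K N -> rat -> Prop) :
  (forall d v, P' d v -> P d v) -> placement_achieves N K M P -> placement_achieves N K M P'.
Proof.
move=> P'P [F [F_gt0 [c [cM [Z HZ]]]]]; exists F; split => //; exists c; split => //.
by exists Z => d v /P'P; apply: HZ.
Qed.

Lemma placement_achieves_empty N K M (P : demand K N -> rat -> Prop) :
  0 <= M -> (forall d v, ~ P d v) -> placement_achieves N K M P.
Proof.
move=> M_ge0 P0; exists 1%N; split => //; exists 0%N; split; first by rewrite mulr1.
by exists (fun _ _ => [tuple]) => d v /P0.
Qed.

Lemma subpacketization_gt0 N K g : (0 < K)%N -> (0 < g <= N)%N -> (0 < K * 'C(N.-1, g.-1))%N.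
Proof. by move=> K_gt0 /andP[g_gt0 gN]; rewrite muln_gt0 K_gt0 bin_gt0; lia. Qed.

Lemma integer_cache_size N K g : (0 < K)%N -> (0 < g)%N ->
  'C(N, g)%:R = (N%:R / (g * K)%:R : rat) * (K * 'C(N.-1, g.-1))%:R.
Proof.
case: g => // g K_gt0 _.
have gK_neq0 : (g.+1 * K)%:R != 0 :> rat by rewrite pnatr_eq0 -lt0n muln_gt0.
rewrite mulrAC -natrM mulnCA mul_bin_diag /=.
have -> : (K * (g.+1 * 'C(N, g.+1)) = 'C(N, g.+1) * (g.+1 * K))%N by ring.
by rewrite natrM mulfK.
Qed.

Lemma integer_rate_le N K g (k0 : 'I_K) (d : demand K N) : (0 < K)%N -> (0 < g <= N)%N ->
  (#|sent_pieces g d k0| + #|coded_sets g d|)%:R <=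
  Rg N K g (Ne d) * (K * 'C(N.-1, g.-1))%:R.
Proof.
move=> K_gt0 gN; have /andP[g_gt0 _] := gN.
have F_neq0 : (K * 'C(N.-1, g.-1))%:R != 0 :> rat.
  by rewrite pnatr_eq0 -lt0n subpacketization_gt0.
rewrite /Rg divfK // lerBrDr -natrD ler_nat.
by rewrite [(K * _)%N]mulnC -mulnA; apply: rate_bound.
Qed.

Lemma Rg_le_Rworst N K g (d : demand K N) : Rg N K g (Ne d) <= Rworst N K g.
Proof. by rewrite /Rworst (bigD1 d) //= le_max lexx. Qed.

Unset Implicit Arguments.

Theorem theorem1 (N K : nat) (hN : (0 < N)%N) (hNK : (N <= K)%N) :
  (forall g : nat, (1 <= g <= N)%N ->
     placement_achieves N K (N%:R / (g * K)%:R : rat)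
       (fun d v => v = Rg N K g (Ne d)))
  /\
  (forall M : rat, 1 / K%:R <= M <= N%:R / K%:R ->
     (forall g : nat, (1 <= g <= N)%N -> M != N%:R / (g * K)%:R) ->
     placement_achieves N K M
       (fun _ v => lower_convex_envelope
                     (fun i : 'I_N => (N%:R / (i.+1 * K)%:R : rat))
                     (fun i : 'I_N => Rworst N K i.+1) M v)).
Proof.
have K_gt0 : (0 < K)%N by apply: leq_trans hNK.
pose k0 := Ordinal K_gt0.
split=> [g gN | M /andP[M_ge _] _].
  have /andP[g_gt0 _] := gN.
  apply: (placement_of_scheme (caching_scheme_integer N k0 g_gt0)).
  - exact: subpacketization_gt0.
  - by rewrite (integer_cache_size _ K_gt0).
  - by move=> d v ->; apply: integer_rate_le.
have [[v0 [[lam [lam_ge0 [lam_sum1 [lamM lamv]]]] v0_min]]|no_envelope] :=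
  classic (exists v, lower_convex_envelope (fun i : 'I_N => (N%:R / (i.+1 * K)%:R : rat))
                                           (fun i : 'I_N => Rworst N K i.+1) M v).
  apply: (placement_achieves_weaken (P := fun _ v => v0 <= v)) => [d v [/v0_min] //|].
  rewrite -lamM -lamv.
  apply: (memory_sharing (R := fun i _ => Rworst N K i.+1)
           (fun i : 'I_N => caching_scheme_integer N k0 (ltn0Sn i))) => // i.
  - by apply: subpacketization_gt0 => //=; apply: ltn_ord.
  - by rewrite (integer_cache_size _ K_gt0).
  - move=> d; apply: le_trans (integer_rate_le _ _ K_gt0 _) _; first exact: ltn_ord.
    by rewrite ler_wpM2r ?ler0n ?Rg_le_Rworst.
apply: placement_achieves_empty => [|d v envelope]; last by apply: no_envelope; exists v.
by apply: le_trans M_ge; rewrite mul1r invr_ge0 ler0n.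
Qed.
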